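(* For each critical poset $\mathcal S$ and each pair $\lambda\neq\mu$ of complex numbers, the subspace representations $\mathcal V_\lambda(\mathcal S)$ and $\mathcal V_\mu(\mathcal S)$ are not equivalent. Moreover, for each critical poset $\mathcal S$, the subspace representation $\mathcal V(\mathcal S_a)$ is schurian.
   Context: A subspace representation of a finite poset $\mathcal P$ is a tuple $(V;V_i)_{i\in\mathcal P}$ of a finite-dimensional complex space $V$ and subspaces with $V_i\subseteq V_j$ whenever $i\prec j$; two such are equivalent if a linear bijection $g$ between the spaces satisfies $g(V_i)=W_i$ for all $i$. It is schurian if $\{g\in\mathrm{End}(V): g(V_i)\subseteq V_i\ \forall i\}=\mathbb C\cdot\mathrm{id}$. The poset $(t_1,\dots,t_s)$ is the disjoint union of incomparable chains of sizes $t_i$; $N$ has elements $a_1,a_2,b_1,b_2$ with exactly $a_1\prec b_1,a_2\prec b_1,a_2\prec b_2$; $(N,4)$ is the disjoint union of $N$ and a 4-chain. The critical posets are $(1,1,1,1),(2,2,2),(1,3,3),(1,2,5),(N,4)$. Let $e_i$ be the standard basis vectors of $\mathbb C^n$, $e_{i_1\dots i_k}=e_{i_1}+\dots+e_{i_k}$, and $\langle\cdots\rangle$ the span. For $\lambda\in\mathbb C$ define $\mathcal V_\lambda(\mathcal S)$ as follows (chains listed bottom to top): $(1,1,1,1)$: $V=\mathbb C^2$, subspaces $\langle e_1\rangle,\langle e_2\rangle,\langle e_1+e_2\rangle,\langle e_1+\lambda e_2\rangle$. $(2,2,2)$: $V=\mathbb C^3$, chains $\langle e_{123}\rangle\subset\langle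 e_{123},e_1+\lambda e_3\rangle$; $\langle e_1\rangle\subset\langle e_1,e_2\rangle$; $\langle e_3\rangle\subset\langle e_2,e_3\rangle$. $(1,3,3)$: $V=\mathbb C^4$, single element $\langle e_{123},e_{24}\rangle$; chains $\langle e_4\rangle\subset\langle e_1,e_4\rangle\subset\langle e_1,e_4,e_2+\lambda e_3\rangle$; $\langle e_3\rangle\subset\langle e_2,e_3\rangle\subset\langle e_1,e_2,e_3\rangle$. $(1,2,5)$: $V=\mathbb C^6$, single element $\langle e_{123},e_{245},e_{16}\rangle$; chain $\langle e_5,e_6\rangle\subset\langle e_1,e_2,e_5,e_6\rangle$; chain $\langle e_4\rangle\subset\langle e_3,e_4\rangle\subset\langle e_2,e_3,e_4\rangle\subset\langle e_1,e_2,e_3,e_4\rangle\subset\langle e_1,e_2,e_3,e_4,e_5+\lambda e_6\rangle$. $(N,4)$: $V=\mathbb C^5$, 4-chain $\langle e_4\rangle\subset\langle e_3,e_4\rangle\subset\langle e_2,e_3,e_4\rangle\subset\langle e_1,e_2,e_3,e_4\rangle$; on $N$: $a_1\mapsto\langle e_{235},e_{134}\rangle$, $a_2\mapsto\langle e_5\rangle$, $b_1\mapsto\langle e_{235},e_{134},e_5,e_3+\lambda e_4\rangle$, $b_2\mapsto\langle e_1,e_2,e_5\rangle$. In each case let $a\in\mathcal S$ be the unique element whose subspace depends on $\lambda$, $\mathcal S_a=\mathcal S\setminus\{a\}$ (with induced order), and $\mathcal V(\mathcal S_a)$ the subspace representation of $\mathcal S_a$ obtained from $\mathcal V_\lambda(\mathcal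 S)$ by deleting the subspace at $a$. *)

(* Complex numbers are modelled as R[i] = complex R for an
   arbitrary R : realType (a complete archimedean ordered field, i.e. the reals). *)
From HB Require Import structures.
From mathcomp Require Import all_boot all_order all_algebra.
From mathcomp Require Import reals.
From mathcomp Require Import complex.
Set Implicit Arguments. Unset Strict Implicit. Unset Printing Implicit Defensive.
Import Order.TTheory GRing.Theory Num.Theory.
Local Open Scope ring_scope.

(* A subspace of F^n is represented by the row space of a square matrix;
   linear maps act on row vectors: g(U) is the row space of U *m g. *)
Section General.
Variable F : fieldType.

Definition span n (s : seq 'rV[F]_n) : 'M[F]_n := (\sum_(v <- s) <<v>>)%MS.

(* standard basis vector e_i of F^n, 1-indexed as in the paper *)
Definition ev n (i : nat) : 'rV[F]_n := \row_(j < n) ((j == i.-1 :> nat)%:R).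

Definition evs n (s : seq nat) : 'rV[F]_n := \sum_(i <- s) ev n i.

Definition is_subspace_rep (P : Type) (le : rel P) n (V : P -> 'M[F]_n) :=
  forall i j, le i j -> (V i <= V j)%MS.

Definition rep_equiv (P : Type) n m (V : P -> 'M[F]_n) (W : P -> 'M[F]_m) :=
  exists g : 'M[F]_(n, m),
    [/\ row_free g, row_full g & forall i, (V i *m g == W i)%MS].

Definition schurian (P : Type) n (V : P -> 'M[F]_n) :=
  forall g : 'M[F]_n, (forall i, (V i *m g <= V i)%MS) <-> exists c : F, g = c%:M.

End General.

Inductive critical := C1111 | C222 | C133 | C125 | CN4.

Definition csize (S : critical) : nat :=
  match S with C1111 => 4 | C222 => 6 | C133 => 7 | C125 => 8 | CN4 => 8 end%N.

Definition cdim (S : critical) : nat :=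
  match S with C1111 => 2 | C222 => 3 | C133 => 4 | C125 => 6 | CN4 => 5 end%N.

(* Enumeration of elements (chains listed bottom to top):
   (1,1,1,1): 0,1,2,3                         (a = 3)
   (2,2,2)  : chain 0<1, chain 2<3, chain 4<5 (a = 1)
   (1,3,3)  : single 0, chain 1<2<3, chain 4<5<6 (a = 3)
   (1,2,5)  : single 0, chain 1<2, chain 3<4<5<6<7 (a = 7)
   (N,4)    : 4-chain 0<1<2<3, a1 = 4, a2 = 5, b1 = 6, b2 = 7 (a = 6 = b1) *)
Definition crel (S : critical) (i j : nat) : bool :=
  match S with
  | C1111 => false
  | C222 => [|| (i, j) == (0, 1), (i, j) == (2, 3) | (i, j) == (4, 5)]
  | C133 => [|| [&& 1 <= i, i < j & j <= 3] | [&& 4 <= i, i < j & j <= 6]]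
  | C125 => [|| (i, j) == (1, 2) | [&& 3 <= i, i < j & j <= 7]]
  | CN4 => [|| [&& i < j & j <= 3], (i, j) == (4, 6), (i, j) == (5, 6)
              | (i, j) == (5, 7)]
  end%N.

Definition cle (S : critical) : rel 'I_(csize S) :=
  fun i j => crel S i j.

Definition ca (S : critical) : nat :=
  match S with C1111 => 3 | C222 => 1 | C133 => 3 | C125 => 7 | CN4 => 6 end%N.

Section Reps.
Variable R : realType.
Local Notation C := R[i].

Local Notation e n i := (@ev C n i).
Local Notation E n s := (@evs C n s).
Local Notation sp n s := (@span C n s).

Definition V1111 (l : C) : seq 'M[C]_2 :=
  [:: sp 2 [:: e 2 1]; sp 2 [:: e 2 2]; sp 2 [:: e 2 1 + e 2 2];
      sp 2 [:: e 2 1 + l *: e 2 2]].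
Definition V222 (l : C) : seq 'M[C]_3 :=
  [:: sp 3 [:: E 3 [:: 1; 2; 3]%N];
      sp 3 [:: E 3 [:: 1; 2; 3]%N; e 3 1 + l *: e 3 3];
      sp 3 [:: e 3 1]; sp 3 [:: e 3 1; e 3 2];
      sp 3 [:: e 3 3]; sp 3 [:: e 3 2; e 3 3]].
Definition V133 (l : C) : seq 'M[C]_4 :=
  [:: sp 4 [:: E 4 [:: 1; 2; 3]%N; E 4 [:: 2; 4]%N];
      sp 4 [:: e 4 4]; sp 4 [:: e 4 1; e 4 4];
      sp 4 [:: e 4 1; e 4 4; e 4 2 + l *: e 4 3];
      sp 4 [:: e 4 3]; sp 4 [:: e 4 2; e 4 3]; sp 4 [:: e 4 1; e 4 2; e 4 3]].
Definition V125 (l : C) : seq 'M[C]_6 :=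
  [:: sp 6 [:: E 6 [:: 1; 2; 3]%N; E 6 [:: 2; 4; 5]%N; E 6 [:: 1; 6]%N];
      sp 6 [:: e 6 5; e 6 6]; sp 6 [:: e 6 1; e 6 2; e 6 5; e 6 6];
      sp 6 [:: e 6 4]; sp 6 [:: e 6 3; e 6 4]; sp 6 [:: e 6 2; e 6 3; e 6 4];
      sp 6 [:: e 6 1; e 6 2; e 6 3; e 6 4];
      sp 6 [:: e 6 1; e 6 2; e 6 3; e 6 4; e 6 5 + l *: e 6 6]].
Definition VN4 (l : C) : seq 'M[C]_5 :=
  [:: sp 5 [:: e 5 4]; sp 5 [:: e 5 3; e 5 4]; sp 5 [:: e 5 2; e 5 3; e 5 4];
      sp 5 [:: e 5 1; e 5 2; e 5 3; e 5 4];
      sp 5 [:: E 5 [:: 2; 3; 5]%N; E 5 [:: 1; 3; 4]%N];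
      sp 5 [:: e 5 5];
      sp 5 [:: E 5 [:: 2; 3; 5]%N; E 5 [:: 1; 3; 4]%N; e 5 5; e 5 3 + l *: e 5 4];
      sp 5 [:: e 5 1; e 5 2; e 5 5]].

Definition critVs (S : critical) (l : C) : seq 'M[C]_(cdim S) :=
  match S return seq 'M[C]_(cdim S) with
  | C1111 => V1111 l | C222 => V222 l | C133 => V133 l
  | C125 => V125 l | CN4 => VN4 l
  end.

Definition critV (S : critical) (l : C) : 'I_(csize S) -> 'M[C]_(cdim S) :=
  fun i => nth 0 (critVs S l) i.
Arguments critV S l i : clear implicits.

(* V(S_a): the representation of S \ {a} obtained by deleting the subspace at a
   (it does not depend on l) *)
Definition critVa (S : critical) (l : C) :
    {i : 'I_(csize S) | (i : nat) != ca S} -> 'M[C]_(cdim S) :=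
  fun i => @critV S l (val i).

End Reps.
Arguments critV {R} S l i.
Arguments critVa {R} S l i.

(* Away from the distinguished element a, the subspaces of V_l(S) do not depend
   on l. An endomorphism g preserving all of them is scalar: a coordinate subspace
   <e_j : j in J> among them forces g_kj = 0 whenever k is in J and j is not, and the
   few entries left free are pinned down by evaluating, on the images of the
   generators of the single non-coordinate subspace, linear forms vanishing on that
   subspace. So V(S_a) is schurian, and an equivalence V_l(S) -> V_m(S) must be a
   nonzero scalar, hence would map V_l(a) onto V_m(a); this fails for l != m, since
   some linear form vanishes on V_m(a) but takes the value m - l on the
   l-dependent generator of V_l(a). *)

From HB Require Import structures.
From mathcomp Require Import all_boot all_order all_algebra.
From mathcomp Require Import reals complex.
From mathcomp Require Import ring.
Set Implicit Arguments. Unset Strict Implicit. Unset Printing Implicit Defensive.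
Import Order.TTheory GRing.Theory Num.Theory.
Local Open Scope ring_scope.

Arguments ev {F} n i.
Arguments evs {F} n s.

Section BilinearPairing.
Variables (F : fieldType) (n : nat).
Implicit Types (x y : 'rV[F]_n) (s t : seq 'rV[F]_n).

Definition dot x y : F := (x *m y^T) 0 0.

Lemma dotDl x1 x2 y : dot (x1 + x2) y = dot x1 y + dot x2 y.
Proof. by rewrite /dot mulmxDl mxE. Qed.

Lemma dotDr x y1 y2 : dot x (y1 + y2) = dot x y1 + dot x y2.
Proof. by rewrite /dot linearD mulmxDr mxE. Qed.

Lemma dotZl a x y : dot (a *: x) y = a * dot x y.
Proof. by rewrite /dot -scalemxAl mxE. Qed.

Lemma dotZr a x y : dot x (a *: y) = a * dot x y.
Proof. by rewrite /dot linearZ -scalemxAr mxE. Qed.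

Lemma dotNr x y : dot x (- y) = - dot x y.
Proof. by rewrite /dot raddfN mulmxN mxE. Qed.

Lemma dot0l y : dot 0 y = 0.
Proof. by rewrite /dot mul0mx mxE. Qed.

Lemma sub_kermx_dot x y : (x <= kermx y^T)%MS = (dot x y == 0).
Proof.
rewrite sub_kermx /dot; apply/eqP/eqP => [->|xy0]; first by rewrite mxE.
by apply/rowP => i; rewrite ord1 xy0 mxE.
Qed.

Lemma mem_span s v : v \in s -> (v <= span s)%MS.
Proof.
rewrite /span; elim: s => // u s IH; rewrite inE big_cons.
case/predU1P => [->|/IH vs]; first by rewrite -{1}(genmxE u) addsmxSl.
exact: submx_trans vs (addsmxSr _ _).
Qed.

Lemma span_sub s (A : 'M[F]_n) : (span s <= A)%MS = all (fun u => u <= A)%MS s.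
Proof.
rewrite /span; elim: s => [|u s IH]; first by rewrite big_nil sub0mx.
by rewrite big_cons addsmx_sub genmxE IH.
Qed.

Lemma dot_span0 t x w :
  (x <= span t)%MS -> {in t, forall u, dot u w = 0} -> dot x w = 0.
Proof.
move=> xt tw; apply/eqP; rewrite -sub_kermx_dot (submx_trans xt) // span_sub.
by apply/allP => u /tw; rewrite sub_kermx_dot => ->.
Qed.

Lemma sub_span_dot0 s t k w :
  (span s <= span t)%MS -> {in t, forall u, dot u w = 0} -> dot s`_k w = 0.
Proof.
move=> st tw; have [ks|/(nth_default 0)->] := ltnP k (size s); last by rewrite dot0l.
exact: dot_span0 (submx_trans (mem_span (mem_nth 0 ks)) st) tw.
Qed.

Lemma stable_dot0 s (g : 'M[F]_n) k w :
  stablemx (span s) g -> {in s, forall u, dot u w = 0} -> dot (s`_k *m g) w = 0.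
Proof.
move=> sg sw; have [ks|/(nth_default 0)->] := ltnP k (size s); last first.
  by rewrite mul0mx dot0l.
exact: dot_span0 (submx_trans (submxMr g (mem_span (mem_nth 0 ks))) sg) sw.
Qed.

End BilinearPairing.

Section StandardBasis.
Variables (F : fieldType) (n : nat).

Definition entry (g : 'M[F]_n.+1) (i j : nat) : F := g (inord i.-1) (inord j.-1).

Definition coord_subspace (J : seq nat) : 'M[F]_n.+1 :=
  span [seq ev n.+1 j | j <- J].

Lemma ev_delta i :
  (0 < i <= n.+1)%N -> ev n.+1 i = delta_mx 0 (inord i.-1) :> 'rV[F]_n.+1.
Proof.
case/andP=> i0 iN; apply/rowP => k; rewrite !mxE eqxx /= -(inj_eq val_inj) /=.
by rewrite inordK // prednK.
Qed.

Lemma dot_ev i j : (0 < i <= n.+1)%N -> (0 < j <= n.+1)%N ->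
  dot (ev n.+1 i) (ev n.+1 j) = (i == j)%:R :> F.
Proof.
move=> hi hj; have /andP[i0 iN] := hi; have /andP[j0 jN] := hj.
rewrite (ev_delta hi) (ev_delta hj) /dot trmx_delta mul_delta_mx_cond mulmxnE mxE !eqxx.
by rewrite -(inj_eq val_inj) /= !inordK ?prednK // -eqSS !prednK.
Qed.

Lemma dot_ev_mulmx (g : 'M[F]_n.+1) i j :
  (0 < i <= n.+1)%N -> (0 < j <= n.+1)%N ->
  dot (ev n.+1 i *m g) (ev n.+1 j) = entry g i j.
Proof.
by move=> hi hj; rewrite (ev_delta hi) (ev_delta hj) /dot -rowE trmx_delta -colE !mxE.
Qed.


Lemma stable_coord_subspace_entry0 (g : 'M[F]_n.+1) J k j :
  stablemx (coord_subspace J) g -> all (fun i => 0 < i <= n.+1)%N J ->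
  k \in J -> (0 < j <= n.+1)%N -> j \notin J -> entry g k j = 0.
Proof.
move=> Jg Jb kJ hj jJ; rewrite -dot_ev_mulmx ?(allP Jb _ kJ) //.
have -> : ev n.+1 k = [seq ev n.+1 i | i <- J]`_(index k J) :> 'rV[F]_n.+1.
  by rewrite (nth_map 0%N) ?index_mem // nth_index.
apply: stable_dot0 Jg _ => _ /mapP[i iJ ->].
by rewrite dot_ev ?(allP Jb _ iJ) //; case: (i =P j) iJ jJ => [->->|].
Qed.

Definition separated (Js : seq (seq nat)) (k j : nat) :=
  has (fun J => (k \in J) && (j \notin J)) Js.

Lemma separated_entry0 (g : 'M[F]_n.+1) Js k j :
  all (fun J => stablemx (coord_subspace J) g) Js -> all (all (fun i => 0 < i <= n.+1)%N) Js ->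
  (0 < j <= n.+1)%N -> separated Js k j -> entry g k j = 0.
Proof.
move=> Jsg Jsb hj /hasP[J JJs /andP[kJ jJ]].
exact: stable_coord_subspace_entry0 (allP Jsg J JJs) (allP Jsb J JJs) kJ hj jJ.
Qed.

(* Each off-diagonal entry is killed either by some coordinate subspace in [Js]
   containing e_i but not e_j, or by hand (the list [X]). *)
Lemma is_scalar_mx_pattern (g : 'M[F]_n.+1) Js (X : seq (nat * nat)) :
  all (fun J => stablemx (coord_subspace J) g) Js -> all (all (fun i => 0 < i <= n.+1)%N) Js ->
  all (fun i => all (fun j => [|| i == j, separated Js i j | (i, j) \in X])
                    (iota 1 n.+1)) (iota 1 n.+1) ->
  all (fun ij => entry g ij.1 ij.2 == 0) X ->
  all (fun i => entry g i i == entry g 1 1) (iota 1 n.+1) ->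
  is_scalar_mx g.
Proof.
move=> Jsg Jsb cover Xg dg; apply/is_scalar_mxP; exists (entry g 1 1).
apply/matrixP => i j; rewrite mxE.
have gE (a b : 'I_n.+1) : g a b = entry g a.+1 b.+1 by rewrite /entry !inord_val.
have iota_ord (k : 'I_n.+1) : k.+1 \in iota 1 n.+1.
  by rewrite mem_iota add1n ltnS ltnS ltn_ord.
have hi := iota_ord i; have hj := iota_ord j.
have [<- | nij] := eqVneq i j.
  by rewrite mulr1n gE; apply/eqP: (allP dg _ hi).
rewrite mulr0n gE.
move: (allP (allP cover _ hi) _ hj); rewrite eqSS (inj_eq val_inj) (negbTE nij) /=.
case/orP => [|/(allP Xg)/eqP //]; apply: separated_entry0 Jsg Jsb _.
by rewrite ltnS ltn_ord.
Qed.

End StandardBasis.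

Arguments coord_subspace {F n} J.

Lemma eq_of_lin (V : zmodType) (x y p : V) :
  p = 0 -> x - y = p \/ y - x = p -> x = y.
Proof. by move=> -> [] /eqP; rewrite subr_eq0 => /eqP. Qed.

Ltac dot_expand :=
  rewrite /= /evs ?big_cons ?big_nil ?addr0
    ?(mulmxDl, dotDl, dotDr, dotNr, dotZl, dotZr, dot_ev_mulmx, dot_ev) //=.

Ltac annihilates :=
  let u := fresh "u" in move=> u; rewrite !inE;
  repeat (case/predU1P => [->|]); try move/eqP->; dot_expand; ring.

(* [Z k j isT isT] only typechecks when the entry is separated, so the match
   backtracks over the entries that are not. *)
Ltac zero_entries Z :=
  repeat match goal with |- context [entry _ ?k ?j] => rewrite (Z k j isT isT) end.

Ltac lin :=
  let E := fresh in move=> E; apply: (eq_of_lin E); first [left; ring | right; ring].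

Section CriticalRepresentations.
Variable R : realType.
Local Notation C := R[i].
Local Notation e i := (ev _ i%N).
Local Notation E s := (evs _ s%N).

Lemma stable_V1111_scalar (l : C) (g : 'M[C]_2) :
  (forall i, (i != 3)%N -> stablemx (V1111 l)`_i g) -> is_scalar_mx g.
Proof.
move=> H; pose Js := [:: [:: 1]; [:: 2]]%N.
have HJ : all (fun J => stablemx (coord_subspace J) g) Js.
  by rewrite /= andbT; apply/andP; split; [exact: H 0%N isT | exact: H 1%N isT].
have Z k j := @separated_entry0 _ _ g Js k j HJ isT.
pose A : seq 'rV[C]_2 := [:: e 1 + e 2].
have HA : stablemx (span A) g := H 2%N isT.
have A12 : {in A, forall u, dot u (e 1 - e 2) = 0} by annihilates.
have g22 : entry g 2 2 = entry g 1 1.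
  by move: (stable_dot0 0 HA A12); dot_expand; zero_entries Z; lin.
apply: (is_scalar_mx_pattern (X := [::]) HJ) => //=.
by rewrite g22 !eqxx.
Qed.

Lemma stable_V222_scalar (l : C) (g : 'M[C]_3) :
  (forall i, (i != 1)%N -> stablemx (V222 l)`_i g) -> is_scalar_mx g.
Proof.
move=> H; pose Js := [:: [:: 1]; [:: 1; 2]; [:: 3]; [:: 2; 3]]%N.
have HJ : all (fun J => stablemx (coord_subspace J) g) Js.
  rewrite /= andbT; do ![apply/andP; split].
  exact: H 2%N isT. exact: H 3%N isT. exact: H 4%N isT. exact: H 5%N isT.
have Z k j := @separated_entry0 _ _ g Js k j HJ isT.
pose A : seq 'rV[C]_3 := [:: E [:: 1; 2; 3]].
have HA : stablemx (span A) g := H 0%N isT.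
have A12 : {in A, forall u, dot u (e 1 - e 2) = 0} by annihilates.
have A23 : {in A, forall u, dot u (e 2 - e 3) = 0} by annihilates.
have g22 : entry g 2 2 = entry g 1 1.
  by move: (stable_dot0 0 HA A12); dot_expand; zero_entries Z; lin.
have g33 : entry g 3 3 = entry g 1 1.
  by move: (stable_dot0 0 HA A23); dot_expand; zero_entries Z; rewrite g22; lin.
apply: (is_scalar_mx_pattern (X := [::]) HJ) => //=.
by rewrite g22 g33 !eqxx.
Qed.

Lemma stable_V133_scalar (l : C) (g : 'M[C]_4) :
  (forall i, (i != 3)%N -> stablemx (V133 l)`_i g) -> is_scalar_mx g.
Proof.
move=> H; pose Js := [:: [:: 4]; [:: 1; 4]; [:: 3]; [:: 2; 3]; [:: 1; 2; 3]]%N.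
have HJ : all (fun J => stablemx (coord_subspace J) g) Js.
  rewrite /= andbT; do ![apply/andP; split].
  exact: H 1%N isT. exact: H 2%N isT. exact: H 4%N isT. exact: H 5%N isT. exact: H 6%N isT.
have Z k j := @separated_entry0 _ _ g Js k j HJ isT.
pose A : seq 'rV[C]_4 := [:: E [:: 1; 2; 3]; E [:: 2; 4]].
have HA : stablemx (span A) g := H 0%N isT.
have A13 : {in A, forall u, dot u (e 1 - e 3) = 0} by annihilates.
have A214 : {in A, forall u, dot u (e 2 - e 1 - e 4) = 0} by annihilates.
have g23 : entry g 2 3 = 0.
  by move: (stable_dot0 1 HA A13); dot_expand; zero_entries Z; lin.
have g22 : entry g 2 2 = entry g 1 1.
  by move: (stable_dot0 0 HA A214); dot_expand; zero_entries Z; lin.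
have g33 : entry g 3 3 = entry g 1 1.
  by move: (stable_dot0 0 HA A13); dot_expand; zero_entries Z; rewrite g23; lin.
have g44 : entry g 4 4 = entry g 1 1.
  by move: (stable_dot0 1 HA A214); dot_expand; zero_entries Z; rewrite g22; lin.
apply: (is_scalar_mx_pattern (X := [:: (2, 3)]%N) HJ) => //=.
  by rewrite g23 eqxx.
by rewrite g22 g33 g44 !eqxx.
Qed.

Lemma stable_V125_scalar (l : C) (g : 'M[C]_6) :
  (forall i, (i != 7)%N -> stablemx (V125 l)`_i g) -> is_scalar_mx g.
Proof.
move=> H.
pose Js := [:: [:: 5; 6]; [:: 1; 2; 5; 6]; [:: 4]; [:: 3; 4]; [:: 2; 3; 4]; [:: 1; 2; 3; 4]]%N.
have HJ : all (fun J => stablemx (coord_subspace J) g) Js.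
  rewrite /= andbT; do ![apply/andP; split].
  exact: H 1%N isT. exact: H 2%N isT. exact: H 3%N isT.
  exact: H 4%N isT. exact: H 5%N isT. exact: H 6%N isT.
have Z k j := @separated_entry0 _ _ g Js k j HJ isT.
pose A : seq 'rV[C]_6 := [:: E [:: 1; 2; 3]; E [:: 2; 4; 5]; E [:: 1; 6]].
have HA : stablemx (span A) g := H 0%N isT.
have A45 : {in A, forall u, dot u (e 4 - e 5) = 0} by annihilates.
have A234 : {in A, forall u, dot u (e 2 - e 3 - e 4) = 0} by annihilates.
have A136 : {in A, forall u, dot u (e 1 - e 3 - e 6) = 0} by annihilates.
have g34 : entry g 3 4 = 0.
  by move: (stable_dot0 0 HA A45); dot_expand; zero_entries Z; lin.
have g56 : entry g 5 6 = 0.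
  by move: (stable_dot0 1 HA A136); dot_expand; zero_entries Z; lin.
have g65 : entry g 6 5 = 0.
  by move: (stable_dot0 2 HA A45); dot_expand; zero_entries Z; lin.
have g12 : entry g 1 2 = 0.
  by move: (stable_dot0 2 HA A234); dot_expand; zero_entries Z; lin.
have g33 : entry g 3 3 = entry g 1 1.
  by move: (stable_dot0 0 HA A136); dot_expand; zero_entries Z; lin.
have g66 : entry g 6 6 = entry g 1 1.
  by move: (stable_dot0 2 HA A136); dot_expand; zero_entries Z; lin.
have g22 : entry g 2 2 = entry g 1 1.
  by move: (stable_dot0 0 HA A234); dot_expand; zero_entries Z; rewrite g12 g34 g33; lin.
have g44 : entry g 4 4 = entry g 1 1.
  by move: (stable_dot0 1 HA A234); dot_expand; zero_entries Z; rewrite g22; lin.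
have g55 : entry g 5 5 = entry g 1 1.
  by move: (stable_dot0 1 HA A45); dot_expand; zero_entries Z; rewrite g44; lin.
apply: (is_scalar_mx_pattern (X := [:: (3, 4); (5, 6); (6, 5); (1, 2)]%N) HJ) => //=.
  by rewrite g34 g56 g65 g12 eqxx.
by rewrite g22 g33 g44 g55 g66 !eqxx.
Qed.

Lemma stable_VN4_scalar (l : C) (g : 'M[C]_5) :
  (forall i, (i != 6)%N -> stablemx (VN4 l)`_i g) -> is_scalar_mx g.
Proof.
move=> H.
pose Js := [:: [:: 4]; [:: 3; 4]; [:: 2; 3; 4]; [:: 1; 2; 3; 4]; [:: 5]; [:: 1; 2; 5]]%N.
have HJ : all (fun J => stablemx (coord_subspace J) g) Js.
  rewrite /= andbT; do ![apply/andP; split].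
  exact: H 0%N isT. exact: H 1%N isT. exact: H 2%N isT.
  exact: H 3%N isT. exact: H 5%N isT. exact: H 7%N isT.
have Z k j := @separated_entry0 _ _ g Js k j HJ isT.
pose A : seq 'rV[C]_5 := [:: E [:: 2; 3; 5]; E [:: 1; 3; 4]].
have HA : stablemx (span A) g := H 4%N isT.
have A14 : {in A, forall u, dot u (e 1 - e 4) = 0} by annihilates.
have A25 : {in A, forall u, dot u (e 2 - e 5) = 0} by annihilates.
have A312 : {in A, forall u, dot u (e 3 - e 1 - e 2) = 0} by annihilates.
have g34 : entry g 3 4 = 0.
  by move: (stable_dot0 0 HA A14); dot_expand; zero_entries Z; lin.
have g12 : entry g 1 2 = 0.
  by move: (stable_dot0 1 HA A25); dot_expand; zero_entries Z; lin.
have g33 : entry g 3 3 = entry g 1 1.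
  by move: (stable_dot0 1 HA A312); dot_expand; zero_entries Z; rewrite g12; lin.
have g22 : entry g 2 2 = entry g 1 1.
  by move: (stable_dot0 0 HA A312); dot_expand; zero_entries Z; rewrite g33; lin.
have g55 : entry g 5 5 = entry g 1 1.
  by move: (stable_dot0 0 HA A25); dot_expand; zero_entries Z; rewrite g22; lin.
have g44 : entry g 4 4 = entry g 1 1.
  by move: (stable_dot0 1 HA A14); dot_expand; zero_entries Z; rewrite g34; lin.
apply: (is_scalar_mx_pattern (X := [:: (3, 4); (1, 2)]%N) HJ) => //=.
  by rewrite g34 g12 eqxx.
by rewrite g22 g33 g44 g55 !eqxx.
Qed.

Lemma critVs_free_of_l S (l m : C) i :
  (i != ca S)%N -> (critVs S l)`_i = (critVs S m)`_i.
Proof. by case: S => /=; do 8?[case: i => [|i] //=]. Qed.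

Lemma critVs_at_a_inj S (l m : C) :
  ((critVs S l)`_(ca S) <= (critVs S m)`_(ca S))%MS -> l = m.
Proof.
case: S => /= lm.
- have t_w : {in [:: e 1 + m *: e 2] : seq 'rV[C]_2,
    forall u, dot u (m *: e 1 - e 2) = 0} by annihilates.
  by move: (sub_span_dot0 0 lm t_w); dot_expand; lin.
- have t_w : {in [:: E [:: 1; 2; 3]; e 1 + m *: e 3] : seq 'rV[C]_3,
    forall u, dot u (m *: e 1 + (1 - m) *: e 2 - e 3) = 0} by annihilates.
  by move: (sub_span_dot0 1 lm t_w); dot_expand; lin.
- have t_w : {in [:: e 1; e 4; e 2 + m *: e 3] : seq 'rV[C]_4,
    forall u, dot u (m *: e 2 - e 3) = 0} by annihilates.
  by move: (sub_span_dot0 2 lm t_w); dot_expand; lin.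
- have t_w : {in [:: e 1; e 2; e 3; e 4; e 5 + m *: e 6] : seq 'rV[C]_6,
    forall u, dot u (m *: e 5 - e 6) = 0} by annihilates.
  by move: (sub_span_dot0 4 lm t_w); dot_expand; lin.
- have t_w : {in [:: E [:: 2; 3; 5]; E [:: 1; 3; 4]; e 5; e 3 + m *: e 4] : seq 'rV[C]_5,
    forall u, dot u ((1 - m) *: e 1 - m *: e 2 + m *: e 3 - e 4) = 0} by annihilates.
  by move: (sub_span_dot0 3 lm t_w); dot_expand; lin.
Qed.

Lemma critV_stable_scalar S (l : C) (g : 'M[C]_(cdim S)) :
  (forall i : 'I_(csize S), i != ca S :> nat -> stablemx (critV S l i) g) ->
  is_scalar_mx g.
Proof.
move=> H; have {}H i : (i != ca S)%N -> stablemx (critVs S l)`_i g.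
  have [iS|iS _] := ltnP i (csize S); first exact: H (Ordinal iS).
  by rewrite nth_default ?mul0mx ?sub0mx //; case: S {H} g iS.
case: S g H => g H.
- exact: stable_V1111_scalar H.
- exact: stable_V222_scalar H.
- exact: stable_V133_scalar H.
- exact: stable_V125_scalar H.
- exact: stable_VN4_scalar H.
Qed.

End CriticalRepresentations.

Theorem proposition1 (R : realType) :
  (forall (S : critical) (l m : R[i]), l != m ->
     ~ rep_equiv (critV S l) (critV S m)) /\
  (forall (S : critical) (l : R[i]), schurian (critVa S l)).
Proof.
split=> [S l m lm | S l g].
  have [dimS a_lt] : (0 < cdim S)%N /\ (ca S < csize S)%N by case: S.
  case=> g [gfree _ Vg].
  have /is_scalar_mxP[c gc] : is_scalar_mx g.
    apply: (critV_stable_scalar (l := l)) => i ia; case/andP: (Vg i) => + _.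
    by rewrite /critV -(critVs_free_of_l l m ia).
  have c0 : c != 0.
    apply: contraTneq gfree => c0.
    by rewrite gc c0 raddf0 /row_free mxrank0 eq_sym -lt0n dimS.
  case/andP: (Vg (Ordinal a_lt)); rewrite gc mul_mx_scalar (eqmx_scale _ c0).
  by move=> /critVs_at_a_inj lm' _; rewrite lm' eqxx in lm.
split=> [Hg | [c ->] i]; last exact: stablemxC.
apply/is_scalar_mxP; apply: (critV_stable_scalar (l := l)) => i ia.
exact: Hg (exist _ i ia).
Qed.
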